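(* Let $S$ be the topological space consisting of a convergent sequence of distinct points $s_1, s_2, \dots$ together with its limit $s_0$ (i.e. $S$ is homeomorphic to $\{0\} \cup \{1/k : k \geq 1\} \subset \mathbb{R}$ with the subspace topology). Then the Milnor-Thurston homology groups of $S$ satisfy $\mathcal{H}_n(S) = 0$ for all $n > 0$, and $\mathcal{H}_0(S) \cong \ell^1$ as real vector spaces, where $\ell^1 = \{(a_k)_{k \geq 0} : a_k \in \mathbb{R},\ \sum_{k=0}^\infty |a_k| < \infty\}$.
   Context: Milnor-Thurston (measure) homology: for a topological space $X$ and integer $k \geq 0$, let $C^0(\Delta^k, X)$ be the space of continuous maps from the standard $k$-simplex $\Delta^k$ to $X$ (singular simplices), with the compact-open topology. A (signed) measure is a $\sigma$-additive real-valued set function vanishing on the empty set. A carrier of a Borel measure $\mu$ on $C^0(\Delta^k,X)$ is a set $D$ such that every Borel subset of the complement of $D$ has measure zero. $\mathcal{C}_k(X)$ is the real vector space of finite signed Borel measures on $C^0(\Delta^k,X)$ admitting a compact carrier. For a continuous map $f$ between such spaces, the image measure is $(f\mu)(A) = \mu(f^{-1}(A))$. The boundary $\partial : \mathcal{C}_k(X) \to \mathcal{C}_{k-1}(X)$ is $\partial = \sum_{i=0}^k (-1)^i \partial_i$, where $\partial_i \mu$ is the image measure of $\mu$ under $\sigma \mapsto \sigma \circ \delta_i$, with $\delta_i : \Delta^{k-1} \to \Delta^k$ the standard inclusion of the $i$-th face. $(\mathcal{C}_*(X), \partial)$ is a chain complex and its homology $\mathcal{H}_*(X)$ (real vector spaces)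 is the Milnor-Thurston homology of $X$. *)

From HB Require Import structures.
From mathcomp Require Import all_boot all_order all_algebra.
From mathcomp Require Import all_classical all_reals all_analysis.
Unset Printing Implicit Defensive.
Import Order.TTheory GRing.Theory Num.Theory.
Import numFieldNormedType.Exports.
Local Open Scope classical_set_scope.
Local Open Scope ring_scope.

Section MilnorThurston.
Variable R : realType.

Definition simplex_set (k : nat) : set 'rV[R]_(k.+1) :=
  [set x | (forall i, 0 <= x ord0 i) /\ \sum_i x ord0 i = 1].

(** Delta^k with the subspace topology (initial topology of the inclusion). *)
Definition Delta (k : nat) : Type := set_type (@simplex_set k).

(** Standard inclusion of the i-th face R^(k+1) -> R^(k+2):
    insert a 0 coordinate at position i. *)
Definition face_row (k : nat) (i : 'I_(k.+2)) (x : 'rV[R]_(k.+1)) : 'rV[R]_(k.+2) :=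
  \row_j (if unlift i j is Some j' then x ord0 j' else 0).

Lemma face_row_simplex k (i : 'I_(k.+2)) (x : 'rV[R]_(k.+1)) :
  x \in simplex_set k -> face_row k i x \in simplex_set k.+1.
Proof.
rewrite !inE => -[x0 x1]; split.
  by move=> j; rewrite mxE; case: unlift.
rewrite (bigD1_ord i) //= mxE unlift_none add0r -x1.
by apply: eq_bigr => j _; rewrite mxE liftK.
Qed.

Definition delta (k : nat) (i : 'I_(k.+2)) (x : Delta k) : Delta k.+1 :=
  exist _ (face_row k i (sval x)) (face_row_simplex k i (sval x) (svalP x)).

HB.instance Definition _ k := Topological.on (Delta k).

Definition SingSimp (k : nat) (X : topologicalType) : Type :=
  set_type [set f : {compact-open, Delta k -> X} | continuous f].

HB.instance Definition _ k X := Topological.on (SingSimp k X).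

Definition borel {T : topologicalType} (A : set T) : Prop :=
  <<s [set U : set T | open U] >> A.

(** A (real-valued, hence finite) signed Borel measure on T, represented by a
    set function whose values on non-Borel sets are irrelevant. *)
Definition signed_borel_measure {T : topologicalType} (mu : set T -> R) : Prop :=
  mu set0 = 0 /\
  forall F : nat -> set T, (forall n, borel (F n)) -> trivIset setT F ->
    (fun n => \sum_(i < n) mu (F i)) @ \oo --> mu (\bigcup_n F n).

Definition carrier {T : topologicalType} (mu : set T -> R) (D : set T) : Prop :=
  forall B, borel B -> B `<=` ~` D -> mu B = 0.

Definition MTchain {k : nat} {X : topologicalType} (mu : set (SingSimp k X) -> R) : Prop :=
  signed_borel_measure mu /\ exists D, compact D /\ carrier mu D.

Definition meq {T : topologicalType} (mu nu : set T -> R) : Prop :=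
  forall A, borel A -> mu A = nu A.

(** Preimage of A under sigma |-> sigma o delta_i (C^0(Delta^(k+1),X) -> C^0(Delta^k,X)). *)
Definition face_preim {k : nat} {X : topologicalType} (i : 'I_(k.+2))
    (A : set (SingSimp k X)) : set (SingSimp k.+1 X) :=
  [set s | exists t : SingSimp k X, A t /\
     forall x : Delta k, (sval t : Delta k -> X) x = (sval s : Delta k.+1 -> X) (delta k i x)].

Definition MTboundary {k : nat} {X : topologicalType} (mu : set (SingSimp k.+1 X) -> R) :
    set (SingSimp k X) -> R :=
  fun A => \sum_(i < k.+2) (-1) ^+ i * mu (face_preim i A).

Definition S_set : set R := [set x | x = 0 \/ exists k : nat, x = (k.+1%:R)^-1].
Definition S : Type := set_type S_set.

HB.instance Definition _ := Topological.on S.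

Definition ell1 (a : nat -> R) : Prop :=
  cvg ((fun n => \sum_(k < n) `|a k|) @ \oo).

End MilnorThurston.


Arguments signed_borel_measure {R T} mu.
Arguments carrier {R T} mu D.
Arguments MTchain {R k X} mu.
Arguments meq {R T} mu nu.
Arguments face_preim {R k X} i A.
Arguments MTboundary {R k X} mu A.
Arguments ell1 {R} a.

From HB Require Import structures.
From mathcomp Require Import all_boot all_order all_algebra.
From mathcomp Require Import all_classical all_reals all_analysis.
Import Order.TTheory GRing.Theory Num.Theory.
Import numFieldNormedType.Exports.
Local Open Scope classical_set_scope.
Local Open Scope ring_scope.

(* A continuous map from the (path-connected) simplex to S is constant, since S
   has a gap between any two of its points; hence C^0(Delta^k, S) is a copy of
   the compact countable space S, on which every set is Borel and every finite
   signed measure is a Milnor-Thurston chain. All faces of a constant simplex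
   agree, so the boundary C_(k+1) -> C_k is the canonical isomorphism times
   \sum_i (-1)^i, which is 0 or 1 as k is even or odd: the complex is
   acyclic in positive degrees, and H_0(S) = C_0(S) is the space of signed
   measures on a countable set, i.e. l^1 via the weights of the atoms. *)

Section points_of_S.
Context {R : realType}.

Definition S_ptv (k : nat) : R := if k is k'.+1 then k'.+1%:R^-1 else 0.

Lemma S_ptv_in k : S_ptv k \in S_set R.
Proof. by apply/mem_set; case: k => [|k]; [left | right; exists k]. Qed.

Definition S_pt k : S R := exist _ (S_ptv k) (S_ptv_in k).

Lemma S_ptv_gt0 k : 0 < S_ptv k.+1.
Proof. by rewrite invr_gt0 ltr0n. Qed.

Lemma S_ptv_inj : injective S_ptv.
Proof.
case=> [|m] [|n] //=.
- by move=> /esym/eqP; rewrite invr_eq0 pnatr_eq0.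
- by move=> /eqP; rewrite invr_eq0 pnatr_eq0.
by move/invr_inj/eqP; rewrite eqr_nat => /eqP [->].
Qed.

Lemma S_pt_inj : injective S_pt.
Proof. by move=> m n /(congr1 sval) /S_ptv_inj. Qed.

Lemma S_setP (x : R) : S_set R x -> exists k, x = S_ptv k.
Proof. by case=> [->|[k ->]]; [exists 0%N | exists k.+1]. Qed.

Lemma S_ptP (s : S R) : exists k, s = S_pt k.
Proof.
case: s => x xS; have [k xk] := S_setP _ (set_mem xS).
by exists k; apply: val_inj.
Qed.

Lemma S_set_ge0 x : S_set R x -> 0 <= x.
Proof. by case/S_setP => -[|k] ->; rewrite // ltW // S_ptv_gt0. Qed.

Lemma S_ptv_ltS k : S_ptv k.+2 < S_ptv k.+1.
Proof. by rewrite ltf_pV2 ?posrE ?ltr0n // ltr_nat. Qed.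

Lemma S_set_gap k x : S_set R x -> S_ptv k.+2 < x -> x < S_ptv k.+1 -> False.
Proof.
case/S_setP => -[|j] ->; first by rewrite ltNge ltW // S_ptv_gt0.
rewrite /= !ltf_pV2 ?posrE ?ltr0n // !ltr_nat => h1 h2.
by move: (leq_ltn_trans h2 h1); rewrite ltnn.
Qed.

Lemma S_set_between u w : S_set R u -> S_set R w -> u < w ->
  exists v, [/\ u < v, v < w & ~ S_set R v].
Proof.
move=> Su /S_setP [[|j] ->] uw.
  by move: (S_set_ge0 _ Su); rewrite leNgt uw.
have uj : u <= S_ptv j.+2.
  case/S_setP: Su uw => -[|i] -> //=.
  rewrite ltf_pV2 ?posrE ?ltr0n // ltr_nat => ji.
  by rewrite lef_pV2 ?posrE ?ltr0n // ler_nat.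
have [h1 h2] := midf_lt (S_ptv_ltS j).
exists ((S_ptv j.+2 + S_ptv j.+1) / 2); split => //; first exact: le_lt_trans uj h1.
by move=> /S_set_gap /(_ h1 h2).
Qed.

Lemma nbhs_S_pt0 (B : set (S R)) : nbhs (S_pt 0) B ->
  exists N, forall n, (N <= n)%N -> B (S_pt n).
Proof.
move=> /nbhs_ballP [e /= e0 eB].
exists (Num.truncn e^-1).+1 => n Nn; apply: eB.
change (ball (0 : R) e (S_ptv n)); rewrite -ball_normE /ball_ /= sub0r normrN.
case: n Nn => // m Nm; rewrite /= ger0_norm ?invr_ge0 ?ler0n //.
rewrite -[e]invrK ltf_pV2 ?posrE ?ltr0n ?invr_gt0 //.
apply: lt_le_trans (truncnS_gt _) _; rewrite ler_nat; exact: Nm.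
Qed.

(* A filter without cluster point at [S_pt 0] contains a set avoiding a
   neighbourhood of [S_pt 0], hence a finite set. *)
Lemma S_compact : compact [set: S R].
Proof.
move=> F PF _.
have [c0|nc0] := pselect (cluster F (S_pt 0)); first by exists (S_pt 0).
have [A [B [FA nB AB]]] : exists A B, [/\ F A, nbhs (S_pt 0) B & A `&` B = set0].
  apply: contrapT => H; apply: nc0 => A B FA nB.
  by apply/set0P/negP => /eqP AB; apply: H; exists A, B.
have [N hN] := nbhs_S_pt0 _ nB.
have AC : A `<=` S_pt @` `I_N.
  move=> s As; have [n sn] := S_ptP s; exists n; last by rewrite sn.
  rewrite /= ltnNge; apply/negP => Nn.
  have : (A `&` B) s by split => //; rewrite sn; exact: hN.
  by rewrite AB.
have cC : compact (S_pt @` `I_N) by apply/finite_compact/finite_image/finite_II.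
have [x [_ clx]] := cC F PF (filterS AC FA).
by exists x.
Qed.

Lemma open_setC1_S (s : S R) : open (~` [set s]).
Proof.
exists (~` [set sval s]).
  apply/closed_openC/accessible_closed_set1.
  exact/hausdorff_accessible/Rhausdorff.
apply/seteqP; split => t /=; first by move=> ne ts; apply: ne; rewrite ts.
by move=> ne e; apply: ne; apply: val_inj.
Qed.

End points_of_S.

Section segments_in_Delta.
Context {R : realType} (k : nat).

Definition clamp01 (t : R) : R := Num.min 1 (Num.max 0 t).

Lemma clamp01_ge0 t : 0 <= clamp01 t.
Proof. by rewrite le_min ler01 le_max lexx. Qed.

Lemma clamp01_le1 t : clamp01 t <= 1.
Proof. by rewrite ge_min lexx. Qed.

Lemma continuous_clamp01 : continuous clamp01.
Proof.
move=> t; apply: continuous_min; first exact: cvg_cst.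
by apply: continuous_max; [exact: cvg_cst | exact: cvg_id].
Qed.

Definition segmentv (x y : Delta R k) (t : R) : 'rV[R]_k.+1 :=
  sval x + clamp01 t *: (sval y - sval x).

Lemma segmentv_in x y t : segmentv x y t \in simplex_set R k.
Proof.
have /set_mem [x0 x1] := svalP x; have /set_mem [y0 y1] := svalP y.
apply/mem_set; split.
  move=> i; rewrite !mxE.
  have -> : sval x ord0 i + clamp01 t * (sval y ord0 i - sval x ord0 i) =
      (1 - clamp01 t) * sval x ord0 i + clamp01 t * sval y ord0 i.
    by rewrite mulrBr mulrBl mul1r addrA addrAC.
  by rewrite addr_ge0 // mulr_ge0 // ?clamp01_ge0 // subr_ge0 clamp01_le1.
under eq_bigr do rewrite !mxE.
by rewrite big_split /= -mulr_sumr big_split /= sumrN x1 y1 subrr mulr0 addr0.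
Qed.

(* The affine path from [x] to [y], kept constant outside [0, 1] so that it
   is continuous on the whole real line. *)
Definition segment x y t : Delta R k := exist _ (segmentv x y t) (segmentv_in x y t).

Lemma continuous_segment x y : continuous (segment x y).
Proof.
apply: (@continuous_comp_initial _ _ _ (@set_val _ (simplex_set R k))) => t.
apply: (@continuousD _ _ _ (fun=> sval x) (fun t => clamp01 t *: (sval y - sval x))).
  exact: cvg_cst.
exact/continuousZr_tmp/continuous_clamp01.
Qed.

Lemma segment0 x y : segment x y 0 = x.
Proof.
apply: val_inj => /=; rewrite /segmentv.
rewrite (_ : clamp01 _ = 0) ?scale0r ?addr0 //.
by rewrite /clamp01 maxxx; apply/min_idPr/ler01.
Qed.

Lemma segment1 x y : segment x y 1 = y.
Proof.
apply: val_inj => /=; rewrite /segmentv.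
rewrite (_ : clamp01 _ = 1) ?scale1r ?[sval x + _]addrC ?subrK //.
by rewrite /clamp01 (max_idPr ler01) minxx.
Qed.

End segments_in_Delta.

(* By the intermediate value theorem along a segment, a non-constant map
   would take a value in one of the gaps of [S]. *)
Lemma continuous_Delta_S_const {R : realType} k (f : Delta R k -> S R) :
  continuous f -> forall x y, f x = f y.
Proof.
move=> cf x y; apply: contrapT => fxy.
pose h t := sval (f (segment k x y t)).
have ch : continuous h.
  move=> t; apply: (@continuous_comp _ _ _ (f \o segment k x y) set_val).
    exact: continuous_comp (continuous_segment _ _ _ _) (cf _).
  exact: initial_continuous.
have Sh t : S_set R (h t) := set_mem (svalP (f (segment k x y t))).
have [v [v1 v2 nSv]] : exists v,
    [/\ Num.min (h 0) (h 1) < v, v < Num.max (h 0) (h 1) & ~ S_set R v].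
  have : h 0 != h 1.
    apply/eqP; rewrite /h segment0 segment1 => e.
    by apply: fxy; apply: val_inj.
  by case: ltgtP => // ? _; exact: S_set_between.
have [c _ hc] :=
  IVT ler01 (continuous_subspaceT ch) (introT andP (conj (ltW v1) (ltW v2))).
by apply: nSv; rewrite -hc.
Qed.

Section singular_simplices_of_S.
Context {R : realType}.
Local Notation SS k := (SingSimp R k (S R)).

Definition vertex0v k : 'rV[R]_k.+1 := \row_j (j == ord0)%:R.

Lemma vertex0v_in k : vertex0v k \in simplex_set R k.
Proof.
apply/mem_set; split => [i|]; first by rewrite mxE ler0n.
rewrite (bigD1 ord0) //= mxE eqxx big1 ?addr0 // => i /negPf ni0.
by rewrite mxE ni0.
Qed.

Definition vertex0 k : Delta R k := exist _ (vertex0v k) (vertex0v_in k).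

Definition sing_eval k (s : SS k) : S R := (sval s : Delta R k -> S R) (vertex0 k).

Definition sing_const k (p : S R) : SS k :=
  exist _ ((fun _ => p) : {compact-open, Delta R k -> S R})
    (mem_set (@cst_continuous _ _ p)).

Lemma sing_constK k : cancel (sing_const k) (sing_eval k).
Proof. by []. Qed.

Lemma sing_evalE k (s : SS k) x : (sval s : Delta R k -> S R) x = sing_eval k s.
Proof. exact: continuous_Delta_S_const (set_mem (svalP s)) _ _. Qed.

Lemma sing_evalK k : cancel (sing_eval k) (sing_const k).
Proof. by move=> s; apply: val_inj; apply: funext => x /=; rewrite sing_evalE. Qed.

Lemma sing_eval_inj k : injective (sing_eval k).
Proof. exact: can_inj (@sing_evalK k). Qed.

Lemma face_preimE k (i : 'I_k.+2) (A : set (SS k)) :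
  face_preim i A = [set s | A (sing_const k (sing_eval k.+1 s))].
Proof.
apply/seteqP; split => s /=.
  case=> t [At tE].
  suff -> : sing_const k (sing_eval k.+1 s) = t by [].
  apply: sing_eval_inj.
  by rewrite sing_constK [sing_eval k t]/sing_eval tE sing_evalE.
move=> Ac; exists (sing_const k (sing_eval k.+1 s)); split => // x /=.
by rewrite sing_evalE.
Qed.

Lemma open_setC1_SingSimp k (s : SS k) : open (~` [set s]).
Proof.
exists [set g : {compact-open, Delta R k -> S R} |
        g @` [set vertex0 k] `<=` ~` [set sing_eval k s]].
  by apply: compact_open_open; [exact: compact_set1 | exact: open_setC1_S].
apply/seteqP; split => t /=.
  move=> h ts; apply: (h (sing_eval k t)); last by rewrite ts.
  by exists (vertex0 k).
by move=> ne _ [x -> <-] /= e; apply/ne/sing_eval_inj.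
Qed.

(* Points are closed and there are countably many of them. *)
Lemma borel_SingSimp k (A : set (SS k)) : borel A.
Proof.
have [B0 BC BU] := @smallest_sigma_algebra _ setT [set U : set (SS k) | open U].
have borel1 (s : SS k) : borel [set s].
  rewrite /borel -(setCK [set s]) -setTD.
  apply: BC; apply: sub_sigma_algebra; exact: open_setC1_SingSimp.
have -> : A = \bigcup_n (A `&` [set sing_const k (S_pt n)]).
  apply/seteqP; split => [s As|s [n _ [As _]]] //.
  have [n sn] := S_ptP (sing_eval k s).
  by exists n => //; split => //=; rewrite -sn sing_evalK.
apply: BU => n; have [An|nAn] := pselect (A (sing_const k (S_pt n))).
  by rewrite setIidr; [exact: borel1 | move=> _ ->].
rewrite (_ : _ `&` _ = set0) //.
by apply/seteqP; split => s // [As sn]; apply: nAn; rewrite -sn.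
Qed.

Lemma continuous_sing_const k : continuous (@sing_const k).
Proof.
apply: (@continuous_comp_initial _ _ _
  (@set_val _ [set f : {compact-open, Delta R k -> S R} | continuous f])).
move=> p; apply/compact_open_cvgP.
  exact: (@fmap_filter _ _ (set_val \o sing_const k) _ (@nbhs_filter (S R) p)).
move=> K O _ oO KO.
have [[x Kx]|K0] := pselect (K !=set0).
  have Op : O p by apply: KO; exists x.
  by apply: filterS (open_nbhs_nbhs (conj oO Op)) => q Oq _ [y _ <-].
apply: filterS (open_nbhs_nbhs (conj (@openT (S R)) (I : setT p))).
by move=> q _ z [y Ky _]; exfalso; apply: K0; exists y.
Qed.

Lemma compact_SingSimp k : compact [set: SS k].
Proof.
rewrite (_ : [set: SS k] = sing_const k @` setT); last first.
  by apply/seteqP; split => s // _; exists (sing_eval k s); rewrite ?sing_evalK.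
apply: continuous_compact S_compact.
exact/continuous_subspaceT/continuous_sing_const.
Qed.

End singular_simplices_of_S.

Lemma sum_signr {R : ringType} n : \sum_(i < n) (-1) ^+ i = (odd n)%:R :> R.
Proof.
elim: n => [|n IH]; first by rewrite big_ord0.
rewrite big_ord_recr /= IH -signr_odd.
by case: (odd n); rewrite ?expr1 ?expr0 ?subrr ?add0r.
Qed.

Lemma signed_borel_measure0 {R : realType} {T : topologicalType} :
  signed_borel_measure (fun _ : set T => 0 : R).
Proof.
split => // F _ _; rewrite (_ : (fun n => _) = fun=> 0); first exact: cvg_cst.
by apply: funext => n; rewrite big1.
Qed.

Lemma signed_borel_measure_preimage {R : realType} {T U : topologicalType}
    (phi : T -> U) (c : set T -> R) :
  (forall B, borel B -> borel (phi @^-1` B)) ->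
  signed_borel_measure c -> signed_borel_measure (fun B => c (phi @^-1` B)).
Proof.
move=> phiB [c0 cU]; split; first by rewrite preimage_set0.
move=> F FB tF; rewrite preimage_bigcup; apply: cU => [n|]; first exact: phiB.
by move=> m n _ _ [s [Fm Fn]]; apply: tF => //; exists (phi s).
Qed.

Section chains_on_S.
Context {R : realType}.
Local Notation SS k := (SingSimp R k (S R)).

Lemma MTchain_S k (c : set (SS k) -> R) : signed_borel_measure c -> MTchain c.
Proof.
move=> hc; split => //; exists setT; split; first exact: compact_SingSimp.
move=> B _ BT; suff -> : B = set0 by case: hc.
by apply/seteqP; split => [s /BT /(_ I)|].
Qed.

(* All faces of a (constant) simplex coincide, so only the alternating sum of
   the signs survives. *)
Lemma MTboundary_S k (c : set (SS k.+1) -> R) A :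
  MTboundary c A = (odd k)%:R * c [set s | A (sing_const k (sing_eval k.+1 s))].
Proof.
rewrite /MTboundary; under eq_bigr do rewrite face_preimE.
by rewrite -mulr_suml sum_signr /= negbK.
Qed.

Lemma MTboundary_S_eq0 (d : set (SS 1) -> R) A : MTboundary d A = 0.
Proof. by rewrite MTboundary_S mul0r. Qed.

(* For [m] odd the boundary C_(m+1) -> C_m is injective, so the cycle [c]
   vanishes; for [m] even the boundary C_(m+2) -> C_(m+1) is an isomorphism. *)
Lemma MTcycle_S_boundary m (c : set (SS m.+1) -> R) :
  MTchain c -> meq (MTboundary c) (fun _ => 0) ->
  exists d : set (SS m.+2) -> R, MTchain d /\ meq (MTboundary d) c.
Proof.
move=> [hc _] bc.
case/boolP: (odd m) => om.
  exists (fun _ => 0); split; first exact/MTchain_S/signed_borel_measure0.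
  move=> A _; rewrite MTboundary_S /= om mul0r.
  have := bc [set t | A (sing_const m.+1 (sing_eval m t))] (borel_SingSimp _ _).
  rewrite MTboundary_S om mul1r => <-; congr c.
  by apply/seteqP; split => s /=; rewrite sing_evalK.
exists (fun B => c ((fun s => sing_const m.+2 (sing_eval m.+1 s)) @^-1` B)); split.
  apply/MTchain_S/signed_borel_measure_preimage => // B _.
  exact: borel_SingSimp.
move=> A _; rewrite MTboundary_S /= (negbTE om) mul1r; congr c.
by apply/seteqP; split => s /=; rewrite ?sing_constK sing_evalK.
Qed.

End chains_on_S.

Lemma bigcup_ord_cover_prefix {T : Type} (P : nat -> set T) (f : nat -> T) K :
  exists N, forall k, (k < K)%N ->
    (\bigcup_n P n) (f k) -> (\bigcup_(n < N) P n) (f k).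
Proof.
elim: K => [|K [N hN]]; first by exists 0%N.
have [[n _ Pn]|nP] := pselect ((\bigcup_n P n) (f K)).
  exists (maxn N n.+1) => k; rewrite ltnS leq_eqVlt => /orP[/eqP->|kK] Pk.
    by exists n => //=; rewrite leq_max ltnSn orbT.
  by have [m mN Pm] := hN k kK Pk; exists m => //=; rewrite leq_max mN.
exists N => k; rewrite ltnS leq_eqVlt => /orP[/eqP->|kK] Pk //.
exact: hN.
Qed.

Section l1_mass.
Context {R : realType} (a : nat -> R).
Hypothesis ha : cvgn (series (fun k => `|a k|)).
Local Notation sa := (series (fun k => `|a k|)).

Definition mask (P : set nat) k : R := if `[< P k >] then a k else 0.

Definition l1_mass (P : set nat) : R := limn (series (mask P)).

Lemma norm_mask_le P k : `|mask P k| <= `|a k|.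
Proof. by rewrite /mask; case: ifP; rewrite ?normr0. Qed.

Lemma cvg_series_norm_mask P : cvgn (series (fun k => `|mask P k|)).
Proof. by apply: (series_le_cvg _ _ _ ha) => // k; exact: norm_mask_le. Qed.

Lemma cvg_series_mask P : cvgn (series (mask P)).
Proof. exact/normed_cvg/cvg_series_norm_mask. Qed.

Lemma l1_mass0 : l1_mass set0 = 0.
Proof.
rewrite /l1_mass (_ : series _ = fun=> 0) ?lim_cst //.
by apply: funext => n; rewrite /series /= big1 // => k _; rewrite /mask asboolF.
Qed.

Lemma l1_mass1 k : l1_mass [set k] = a k.
Proof.
apply: (cvg_lim (@Rhausdorff R)); apply: cvg_near_cst; near=> n.
have kn : (k < n)%N by near: n; exists k.+1.
rewrite /series /= (@big_cat_nat _ _ _ k.+1) //= big_nat_recr //= big_nat_cond big1.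
  rewrite add0r big_nat_cond big1 ?addr0 /mask ?asboolT //.
  move=> i /andP[/andP[ki _] _]; rewrite asboolF // => ik.
  by move: ki; rewrite ik ltnn.
move=> i /andP[/andP[_ ik] _]; rewrite /mask asboolF // => ike.
by move: ik; rewrite ike ltnn.
Unshelve. all: by end_near.
Qed.

Lemma l1_massU P Q : P `&` Q = set0 -> l1_mass (P `|` Q) = l1_mass P + l1_mass Q.
Proof.
move=> PQ; rewrite /l1_mass; suff -> : mask (P `|` Q) = mask P + mask Q.
  by rewrite lim_seriesD //; exact: cvg_series_mask.
apply: funext => k; rewrite /mask /= !fctE.
have [Pk|nPk] := pselect (P k); have [Qk|nQk] := pselect (Q k).
- by have : (P `&` Q) k by []; rewrite PQ.
- by rewrite (asboolT (or_introl Pk)) (asboolT Pk) (asboolF nQk) addr0.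
- by rewrite (asboolT (or_intror Qk)) (asboolF nPk) (asboolT Qk) add0r.
- have nPQ : ~ (P k \/ Q k) by case.
  by rewrite (asboolF nPQ) (asboolF nPk) (asboolF nQk) addr0.
Qed.

Lemma l1_mass_split P Q : Q `<=` P -> l1_mass P = l1_mass Q + l1_mass (P `\` Q).
Proof.
move=> QP; rewrite -l1_massU; last by apply/seteqP; split => k // [? []].
by rewrite setDUK.
Qed.

Lemma l1_mass_bigcup_ord (P : nat -> set nat) N : trivIset setT P ->
  \sum_(n < N) l1_mass (P n) = l1_mass (\bigcup_(n < N) P n).
Proof.
move=> tP; elim: N => [|N IH].
  by rewrite big_ord0 bigcup_mkord big_ord0 l1_mass0.
rewrite big_ord_recr /= IH -l1_massU.
  congr l1_mass; apply/seteqP; split => k /=.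
    case=> [[n nN Pnk]|PNk]; last by exists N => //=.
    by exists n => //=; exact: ltn_trans nN (ltnSn N).
  case=> n /=; rewrite ltnS leq_eqVlt => /orP[/eqP->|nN] Pnk; [by right | left].
  by exists n.
apply/seteqP; split => k // [[n nN Pnk] PNk].
have nNe : n = N by apply: tP => //; exists k.
by move: nN; rewrite nNe /= ltnn.
Qed.

Lemma norm_l1_mass_tail D K : (forall k, (k < K)%N -> ~ D k) ->
  `|l1_mass D| <= limn sa - sa K.
Proof.
move=> hD; apply: le_trans (lim_series_norm (cvg_series_norm_mask D)) _.
apply: limr_le; first exact: cvg_series_norm_mask.
near=> n.
have Kn : (K <= n)%N by near: n; exists K.
rewrite [X in X <= _]/series /= (@big_cat_nat _ _ _ K) //=.
rewrite big_nat_cond big1 ?add0r; last first.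
  by move=> k /andP[/andP[_ kK] _]; rewrite /mask asboolF ?normr0 //; exact: hD.
apply: le_trans (_ : \sum_(K <= k < n) `|a k| <= _).
  by apply: ler_sum => k _; exact: norm_mask_le.
rewrite -sub_series_geq // lerB //.
apply: nondecreasing_cvgn_le => //.
exact: (@nondecreasing_series _ (fun k => `|a k|) xpredT 0%N).
Unshelve. all: by end_near.
Qed.

(* Past the index given by [bigcup_ord_cover_prefix], the part of the union
   not yet reached lies in the tail [k >= K] of the absolutely convergent
   series. *)
Lemma l1_mass_sigma_additive (P : nat -> set nat) : trivIset setT P ->
  (fun N => \sum_(n < N) l1_mass (P n)) @ \oo --> l1_mass (\bigcup_n P n).
Proof.
move=> tP.
rewrite (_ : (fun N => _) = fun N => l1_mass (\bigcup_(n < N) P n)); last first.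
  by apply: funext => N; exact: l1_mass_bigcup_ord.
apply/cvgrPdist_le => e e0.
have [K _ hK] := (cvgrPdist_le _ _).1 ha e e0.
have {}hK : limn sa - sa K <= e by apply: le_trans (hK K (leqnn K)); exact: ler_norm.
have [N0 hN0] := bigcup_ord_cover_prefix P id K.
near=> N.
have N0N : (N0 <= N)%N by near: N; exists N0.
rewrite (@l1_mass_split (\bigcup_n P n) (\bigcup_(n < N) P n)); last first.
  by move=> k [n _ Pnk]; exists n.
rewrite addrC addKr; apply: le_trans hK; apply: norm_l1_mass_tail => k kK [Pk nPNk].
apply: nPNk; have [n nN0 Pnk] := hN0 k kK Pk.
by exists n => //=; exact: leq_trans nN0 N0N.
Unshelve. all: by end_near.
Qed.

End l1_mass.

Section zero_chains_on_S.
Context {R : realType}.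
Local Notation SS k := (SingSimp R k (S R)).

Definition atom (k : nat) : SS 0 := sing_const 0 (S_pt k).

Lemma atom_inj : injective atom.
Proof.
by move=> m n /(congr1 (sing_eval 0)); rewrite !sing_constK; exact: S_pt_inj.
Qed.

Lemma atomP (s : SS 0) : exists k, s = atom k.
Proof.
by have [k e] := S_ptP (sing_eval 0 s); exists k; rewrite /atom -e sing_evalK.
Qed.

Definition atom_weights (c : set (SS 0) -> R) k : R := c [set atom k].

Lemma setI_atom (A : set (SS 0)) k :
  A `&` [set atom k] = if `[< A (atom k) >] then [set atom k] else set0.
Proof.
case: asboolP => [Ak|nAk]; apply/seteqP; split => s //; first by case.
- by move=> ->.
- by case=> As sk; apply: nAk; rewrite -sk.
Qed.

Lemma cvg_sum_atoms (c : set (SS 0) -> R) : signed_borel_measure c -> forall A,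
  (fun N => \sum_(n < N) c (A `&` [set atom n])) @ \oo --> c A.
Proof.
move=> [_ cU] A.
have eA : \bigcup_n (A `&` [set atom n]) = A.
  apply/seteqP; split => [s [n _ [As _]] // | s As].
  by have [n sn] := atomP s; exists n.
rewrite -[X in _ --> c X]eA; apply: cU => [n|]; first exact: borel_SingSimp.
by move=> m n _ _ [s [[_ /= e1] [_ /= e2]]]; apply: atom_inj; rewrite -e1 -e2.
Qed.

(* Splitting the atoms by the sign of their weight, the partial sums of
   [|atom_weights c k|] are a difference of two convergent sequences. *)
Lemma ell1_atom_weights c : MTchain c -> ell1 (atom_weights c).
Proof.
move=> [hc _]; have c0 : c set0 = 0 by case: hc.
rewrite /ell1.
pose Ap := [set s | 0 <= c [set s]]; pose An := [set s | c [set s] < 0].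
have -> : (fun n => \sum_(k < n) `|atom_weights c k|) =
    (fun N => \sum_(n < N) c (Ap `&` [set atom n])) -
    (fun N => \sum_(n < N) c (An `&` [set atom n])).
  apply: funext => N; rewrite !fctE -sumrB; apply: eq_bigr => k _.
  rewrite !setI_atom /Ap /An /atom_weights /=.
  have [ge|lt] := leP 0 (c [set atom k]).
    by rewrite ger0_norm // asboolT // asboolF -?leNgt // c0 subr0.
  by rewrite ltr0_norm // asboolF -?ltNge // asboolT // c0 sub0r.
have hp := cvg_sum_atoms _ hc Ap; have hn := cvg_sum_atoms _ hc An.
by apply: is_cvgB; [exact: cvgP hp | exact: cvgP hn].
Qed.

Lemma atom_weights_eq0 c : MTchain c -> atom_weights c = (fun=> 0) ->
  meq c (fun _ => 0).
Proof.
move=> [hc _] c0 A _; have := cvg_sum_atoms _ hc A.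
have -> : (fun N => \sum_(n < N) c (A `&` [set atom n])) = fun=> 0.
  apply: funext => N; apply: big1 => n _; rewrite setI_atom.
  case: asboolP => _; first exact: (congr1 (fun f => f (nat_of_ord n)) c0).
  by case: hc.
by move/(cvg_lim (@Rhausdorff R)); rewrite lim_cst.
Qed.

Lemma atom_weights_surj a : ell1 a -> exists c, MTchain c /\ atom_weights c = a.
Proof.
move=> ea; have ha : cvgn (series (fun k => `|a k|)) by rewrite seriesEord.
exists (fun A => l1_mass a [set k | A (atom k)]); split.
  apply: MTchain_S; split.
    by rewrite (_ : [set k | _] = set0) ?l1_mass0 //; apply/seteqP; split.
  move=> F _ tF /=; rewrite (_ : [set k | _] = \bigcup_n [set k | F n (atom k)]).
    apply: l1_mass_sigma_additive => // m n _ _ [k [h1 h2]].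
    by apply: tF => //; exists (atom k).
  by apply/seteqP; split => k /= [n _ h]; exists n.
apply: funext => k; rewrite /atom_weights.
rewrite (_ : [set j | _] = [set k]) ?l1_mass1 //.
by apply/seteqP; split => j /=; [move/atom_inj | move=> ->].
Qed.

End zero_chains_on_S.

Theorem lemma2 (R : realType) :
  (* H_n(S) = 0 for n = m+1 > 0: every n-cycle is an n-boundary *)
  (forall (m : nat) (c : set (SingSimp R m.+1 (S R)) -> R),
      MTchain c -> meq (MTboundary c) (fun _ => 0) ->
      exists d : set (SingSimp R m.+2 (S R)) -> R,
        MTchain d /\ meq (MTboundary d) c) /\
  (* H_0(S) = C_0(S) / B_0(S) is isomorphic to l^1 as a real vector space *)
  (exists Phi : (set (SingSimp R 0 (S R)) -> R) -> (nat -> R),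
      (forall c, MTchain c -> ell1 (Phi c)) /\
      (forall c c', MTchain c -> MTchain c' -> meq c c' -> Phi c = Phi c') /\
      (forall c c', MTchain c -> MTchain c' ->
         Phi (fun A => c A + c' A) = (fun k => Phi c k + Phi c' k)) /\
      (forall (r : R) c, MTchain c ->
         Phi (fun A => r * c A) = (fun k => r * Phi c k)) /\
      (forall c, MTchain c ->
         (Phi c = (fun _ => 0) <->
          exists d : set (SingSimp R 1 (S R)) -> R, MTchain d /\ meq (MTboundary d) c)) /\
      (forall a : nat -> R, ell1 a -> exists c, MTchain c /\ Phi c = a)).
Proof.
split; first exact: MTcycle_S_boundary.
exists atom_weights; split; first exact: ell1_atom_weights.
split.
  by move=> c c' _ _ cc'; apply: funext => k; apply: cc'; exact: borel_SingSimp.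
do 2 split => //; split; last exact: atom_weights_surj.
move=> c hc; split => [/(atom_weights_eq0 _ hc) c0 | [d [_ dc]]].
  exists (fun _ => 0); split; first exact/MTchain_S/signed_borel_measure0.
  by move=> A Ab; rewrite MTboundary_S_eq0 c0.
apply: funext => k; rewrite /atom_weights -dc ?MTboundary_S_eq0 //.
exact: borel_SingSimp.
Qed.
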